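(* Let $\Pi$ be constructed as below in a metric space of doubling dimension at most $\kappa$. For every point $p\in V$, every integer $r$, and every integer $\alpha\ge 0$, the set $$\Pi(p,r)=\{\langle j,r\rangle\in\Pi : d(p,j)<2^{\alpha}5^{r+1}\}$$ has at most $2^{(\alpha+1)\kappa}$ elements.
   Context: $(V,d)$ is a metric space of diameter $W$ whose doubling dimension is at most $\kappa$: every ball $B(x,\rho)=\{y\in V:d(x,y)\le\rho\}$ can be covered by $2^\kappa$ balls of radius $\rho/2$. $F\subseteq V$ is a finite set of facilities with opening costs $f_j>0$, $f_{\min}=\min_j f_j$. Let $\rho_{\min}=\lfloor\log_5 f_{\min}\rfloor$, $\rho_{\max}=\lceil\log_5 W\rceil$. For each integer $r\in[\rho_{\min},\rho_{\max}]$, let $J'_r=\{j\in F:f_j\le 5^r\}$ and let $J_r$ be a maximal subset of $J'_r$ such that any two facilities of $J_r$ are at distance greater than $5^{r+1}$. $\Pi=\{\langle j,r\rangle:\rho_{\min}\le r\le\rho_{\max},\ j\in J_r\}$. *)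

From Stdlib Require Export Reals List ZArith.
Export ListNotations.
Open Scope R_scope.

Definition is_metric {V : Type} (d : V -> V -> R) : Prop :=
  (forall x y, 0 <= d x y) /\
  (forall x y, d x y = 0 <-> x = y) /\
  (forall x y, d x y = d y x) /\
  (forall x y z, d x z <= d x y + d y z).

Definition ball {V : Type} (d : V -> V -> R) (x : V) (rho : R) : V -> Prop :=
  fun y => d x y <= rho.

Definition doubling_dim_le {V : Type} (d : V -> V -> R) (kappa : R) : Prop :=
  forall (x : V) (rho : R), 0 < rho ->
    exists C : list V, INR (length C) <= Rpower 2 kappa /\
      forall y, ball d x rho y -> exists c, In c C /\ ball d c (rho / 2) y.

Definition is_diameter {V : Type} (d : V -> V -> R) (W : R) : Prop :=
  is_lub (fun w => exists x y, w = d x y) W.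

Definition is_min_cost {V : Type} (F : list V) (f : V -> R) (fmin : R) : Prop :=
  (exists j, In j F /\ f j = fmin) /\ (forall j, In j F -> fmin <= f j).

Definition log5 (x : R) : R := ln x / ln 5.
(* Int_part x is the floor of x *)
Definition floorZ (x : R) : Z := Int_part x.
Definition ceilZ (x : R) : Z := (- Int_part (- x))%Z.

Definition rho_min (fmin : R) : Z := floorZ (log5 fmin).
Definition rho_max (W : R) : Z := ceilZ (log5 W).

Definition Jprime {V : Type} (F : list V) (f : V -> R) (r : Z) (j : V) : Prop :=
  In j F /\ f j <= powerRZ 5 r.

Definition maximal_separated {V : Type} (d : V -> V -> R) (F : list V) (f : V -> R)
    (r : Z) (Jr : V -> Prop) : Prop :=
  (forall j, Jr j -> Jprime F f r j) /\
  (forall a b, Jr a -> Jr b -> a <> b -> powerRZ 5 (r + 1) < d a b) /\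
  (forall j, Jprime F f r j -> ~ Jr j -> exists a, Jr a /\ d a j <= powerRZ 5 (r + 1)).

Definition Pi {V : Type} (rmin rmax : Z) (J : Z -> V -> Prop) (x : V * Z) : Prop :=
  (rmin <= snd x <= rmax)%Z /\ J (snd x) (fst x).

Definition Pi_pr {V : Type} (d : V -> V -> R) (rmin rmax : Z) (J : Z -> V -> Prop)
    (p : V) (r : Z) (alpha : nat) (x : V * Z) : Prop :=
  Pi rmin rmax J x /\ snd x = r /\ d p (fst x) < 2 ^ alpha * powerRZ 5 (r + 1).

Definition card_at_most {T : Type} (P : T -> Prop) (N : R) : Prop :=
  forall l : list T, NoDup l -> (forall x, In x l -> P x) -> INR (length l) <= N.

(* Cover the ball B(p, 2^alpha 5^(r+1)) by 2^((alpha+1) kappa) balls of radius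
   5^(r+1)/2, halving the radius alpha + 1 times.  Two centres j, j' of Pi(p,r)
   lying in one small ball are at distance at most 5^(r+1), so by the separation
   of J_r they coincide: Pi(p,r) meets each small ball at most once. *)

From Stdlib Require Import Lra Lia Classical.
Open Scope R_scope.

Lemma Rpower_nonneg (x y : R) : 0 <= Rpower x y.
Proof. left; apply exp_pos. Qed.

Section DoublingCovers.

Variables (V : Type) (d : V -> V -> R) (kappa : R).
Hypothesis doubling : doubling_dim_le d kappa.

Lemma doubling_cover_balls (s : R) (L : list V) : 0 < s ->
  exists C, INR (length C) <= INR (length L) * Rpower 2 kappa /\
    forall y c, In c L -> ball d c s y -> exists c', In c' C /\ ball d c' (s / 2) y.
Proof.
  intros s_pos; induction L as [|a L [C [lenC coverC]]].
  - exists nil; split; [simpl; lra | intros y c []].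
  - destruct (doubling a s s_pos) as [Ca [lenCa coverCa]].
    exists (Ca ++ C); split.
    + rewrite length_app, plus_INR; cbn [length]; rewrite S_INR; lra.
    + intros y c [<- | inL] yc.
      * destruct (coverCa y yc) as [c' [inCa yc']].
        exists c'; split; [apply in_or_app; left |]; assumption.
      * destruct (coverC y c inL yc) as [c' [inC yc']].
        exists c'; split; [apply in_or_app; right |]; assumption.
Qed.

Lemma doubling_cover_iter (n : nat) (x : V) (rho : R) : 0 < rho ->
  exists C, INR (length C) <= Rpower 2 (INR n * kappa) /\
    forall y, ball d x rho y -> exists c, In c C /\ ball d c (rho / 2 ^ n) y.
Proof.
  intros rho_pos; induction n as [|n [C [lenC coverC]]].
  - exists [x]; split.
    + simpl; rewrite Rmult_0_l, Rpower_O; lra.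
    + intros y xy; exists x; split; [left; reflexivity |].
      unfold ball in *; simpl; rewrite Rdiv_1_r; exact xy.
  - assert (s_pos : 0 < rho / 2 ^ n) by (apply Rdiv_lt_0_compat, pow_lt; lra).
    destruct (doubling_cover_balls _ C s_pos) as [C' [lenC' coverC']].
    exists C'; split.
    + rewrite S_INR, Rmult_plus_distr_r, Rmult_1_l, Rpower_plus.
      eapply Rle_trans; [exact lenC' |].
      apply Rmult_le_compat_r; [apply Rpower_nonneg | exact lenC].
    + intros y xy; destruct (coverC y xy) as [c [inC cy]].
      destruct (coverC' y c inC cy) as [c' [inC' c'y]].
      exists c'; split; [exact inC' |].
      unfold ball in *; replace (rho / 2 ^ S n) with (rho / 2 ^ n / 2);
        [exact c'y | simpl; field; apply pow_nonzero; lra].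
Qed.

End DoublingCovers.

Lemma pigeonhole_cover {A B : Type} (Rel : A -> B -> Prop) (l : list A) (C : list B) :
  NoDup l ->
  (forall x, In x l -> exists c, In c C /\ Rel x c) ->
  (forall x y c, In x l -> In y l -> Rel x c -> Rel y c -> x = y) ->
  (length l <= length C)%nat.
Proof.
  revert C; induction l as [|a l IH]; intros C nodup covered unique; [simpl; lia |].
  inversion nodup as [| ? ? a_notin_l nodup_l]; subst.
  destruct (covered a (or_introl eq_refl)) as [c [inC ac]].
  destruct (in_split c C inC) as [C1 [C2 ->]].
  assert (length l <= length (C1 ++ C2))%nat.
  { apply IH; [exact nodup_l | | intros x y c' inx iny; apply unique; auto using in_cons].
    intros x inl; destruct (covered x (in_cons a x l inl)) as [c' [inC' xc']].
    exists c'; split; [| exact xc'].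
    apply in_app_or in inC' as [inC1 | [<- | inC2]]; auto using in_or_app.
    assert (x = a) as -> by (apply (unique x a c); auto using in_eq, in_cons).
    contradiction. }
  rewrite length_app in *; simpl; lia.
Qed.

Lemma card_at_most_injective {T U : Type} (g : T -> U) (P : T -> Prop) (Q : U -> Prop)
    (N : R) :
  card_at_most Q N -> (forall x, P x -> Q (g x)) ->
  (forall x y, P x -> P y -> g x = g y -> x = y) ->
  card_at_most P N.
Proof.
  intros cardQ PQ g_inj l nodup inP.
  rewrite <- (length_map g l); apply cardQ.
  - apply NoDup_map_NoDup_ForallPairs; [| exact nodup].
    intros x y inx iny; apply g_inj; auto.
  - intros y [x [<- inx]]%in_map_iff; auto.
Qed.

Lemma separated_in_ball_card (V : Type) (d : V -> V -> R) (kappa : R)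
    (p : V) (delta : R) (alpha : nat) (P : V -> Prop) :
  is_metric d -> doubling_dim_le d kappa -> 0 < delta ->
  (forall x, P x -> ball d p (2 ^ alpha * delta) x) ->
  (forall x y, P x -> P y -> x <> y -> delta < d x y) ->
  card_at_most P (Rpower 2 ((INR alpha + 1) * kappa)).
Proof.
  intros [_ [_ [d_sym d_tri]]] doubling delta_pos in_ball separated l nodup inP.
  assert (rho_pos : 0 < 2 ^ alpha * delta)
    by (apply Rmult_lt_0_compat; [apply pow_lt; lra | exact delta_pos]).
  destruct (doubling_cover_iter V d kappa doubling (S alpha) p _ rho_pos)
    as [C [lenC coverC]].
  replace (2 ^ alpha * delta / 2 ^ S alpha) with (delta / 2) in coverC
    by (simpl; field; apply pow_nonzero; lra).
  rewrite <- S_INR; eapply Rle_trans; [apply le_INR | exact lenC].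
  apply (pigeonhole_cover (fun x c => ball d c (delta / 2) x)); [exact nodup | |].
  - intros x inl; destruct (coverC x (in_ball x (inP x inl))) as [c [inC cx]].
    exists c; split; assumption.
  - intros x y c inx iny cx cy; apply NNPP; intro xy.
    pose proof (separated x y (inP x inx) (inP y iny) xy).
    pose proof (d_tri x c y); rewrite (d_sym x c) in *; unfold ball in *; lra.
Qed.

Theorem lemma3 (V : Type) (d : V -> V -> R) (kappa W : R) (F : list V)
    (f : V -> R) (fmin : R) (J : Z -> V -> Prop) :
  is_metric d ->
  doubling_dim_le d kappa ->
  is_diameter d W ->
  (forall j, In j F -> 0 < f j) ->
  is_min_cost F f fmin ->
  (forall r : Z, (rho_min fmin <= r <= rho_max W)%Z -> maximal_separated d F f r (J r)) ->
  forall (p : V) (r : Z) (alpha : nat),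
    card_at_most (Pi_pr d (rho_min fmin) (rho_max W) J p r alpha)
      (Rpower 2 ((INR alpha + 1) * kappa)).
Proof.
  intros metric doubling _ _ _ J_separated p r alpha.
  set (centres := fun j => (rho_min fmin <= r <= rho_max W)%Z /\ J r j /\
                           d p j < 2 ^ alpha * powerRZ 5 (r + 1)).
  apply (card_at_most_injective fst _ centres).
  - apply (separated_in_ball_card _ d kappa p (powerRZ 5 (r + 1)));
      [exact metric | exact doubling | | |].
    + apply powerRZ_lt; lra.
    + intros j [_ [_ near_p]]; unfold ball; lra.
    + intros a b [r_range [Ja _]] [_ [Jb _]]; apply (J_separated r r_range); assumption.
  - intros [j r'] [[r_range Jj] [r_eq near_p]]; simpl in *; subst r'.
    unfold centres; auto.
  - intros [a ra] [b rb] [_ [ra_eq _]] [_ [rb_eq _]]; simpl in *; congruence.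
Qed.
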